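(* Let $q=3^m$ with $m\ge1$ and $f(x)=x^{q+2}$ on $\mathbb{F}_{q^2}$. As $(a,b)$ runs through $\mathbb{F}_{q^2}\times\mathbb{F}_{q^2}^*$, the Walsh transform $W_f(a,b)$ takes the value $-q$ exactly $\frac{q^4-q^3-q^2+q}{3}$ times, the value $0$ exactly $\frac{q^4-q^3-q^2+q}{2}$ times, the value $q$ exactly $q^3-q$ times, and the value $2q$ exactly $\frac{q^4-q^3-q^2+q}{6}$ times.
   Context: For $f:\mathbb{F}_{q^2}\to\mathbb{F}_{q^2}$, the Walsh transform is $W_f(a,b)=\sum_{x\in\mathbb{F}_{q^2}}\xi_3^{\mathrm{Tr}_{\mathbb{F}_{q^2}/\mathbb{F}_3}(bf(x)-ax)}$, where $\xi_3=e^{2\pi i/3}$ and $\mathrm{Tr}_{\mathbb{F}_{q^2}/\mathbb{F}_3}$ is the absolute trace. *)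

From mathcomp Require Import all_boot all_order all_algebra all_field.
Set Implicit Arguments. Unset Strict Implicit. Unset Printing Implicit Defensive.
Import GRing.Theory Num.Theory.
Local Open Scope ring_scope.

Definition xi3 : algC := (-1 + 'i * sqrtC 3%:R) / 2%:R.

(* Absolute trace F_{3^n} -> F_3 (values lie in the prime subfield of F) *)
Definition absTr (F : finFieldType) (n : nat) (x : F) : F :=
  \sum_(i < n) x ^+ (3 ^ i)%N.

(* Canonical additive character of F_3, viewing y in {0,1,2} of the prime field *)
Definition psi3 (F : finFieldType) (y : F) : algC :=
  if y == 0 then 1 else if y == 1 then xi3 else if y == 2%:R then xi3 ^+ 2 else 0.

Definition walsh (F : finFieldType) (n : nat) (f : F -> F) (a b : F) : algC :=
  \sum_(x : F) psi3 (absTr n (b * f x - a * x)).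

From HB Require Import structures.
From mathcomp Require Import all_boot all_order all_algebra all_field.
From mathcomp Require Import ring zify.
Set Implicit Arguments. Unset Strict Implicit. Unset Printing Implicit Defensive.
Import GRing.Theory Num.Theory.
Local Open Scope ring_scope.

(** Since q is odd, F_(q^2) = Fq + Lq, where Fq is the subfield F_q and
    Lq = {y | y^q = -y}.  As x^(q+2) permutes F_(q^2), the substitution
    x := t x reduces W(a, b), b <> 0, to W(a t, 1), so every value is taken
    q^2 - 1 times as often as by a |-> W(a, 1).  For a = (1 - e) + g with
    e in Fq, g in Lq and x = u + y, we have (u + y)^(q+2) = (u - y)(u + y)^2,
    and up to terms of trace zero the exponent becomes u (e - y^2) - g y;
    summing over u in Fq leaves W(a, 1) = q * sum_(y in Lq, y^2 = e) chi(-g y).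
    This is q for e = 0, 0 unless e = s^2 with 0 <> s in Lq, and 2q or -q
    according as Tr(g s) = 0 or not in that case.  The trace is
    equidistributed on Fq, and exactly (q - 1)/2 elements of Fq are such
    squares, which yields the four multiplicities. *)

Lemma xi3_sum : 1 + xi3 + xi3 ^+ 2 = 0.
Proof.
have sqr_s : ('i * sqrtC 3%:R) ^+ 2 = - 3%:R :> algC.
  by rewrite exprMn sqrCi sqrtCK mulN1r.
rewrite /xi3; move: ('i * _) sqr_s => s sqr_s.
have -> : 1 + (-1 + s) / 2%:R + ((-1 + s) / 2%:R) ^+ 2 = (s ^+ 2 + 3%:R) / 4%:R.
  by field.
by rewrite sqr_s addNr mul0r.
Qed.

Lemma xi3_cube : xi3 ^+ 3 = 1.
Proof.
apply/eqP; rewrite -subr_eq0.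
have -> : xi3 ^+ 3 - 1 = (xi3 - 1) * (1 + xi3 + xi3 ^+ 2) by ring.
by rewrite xi3_sum mulr0.
Qed.

Lemma xi3_neq1 : xi3 != 1.
Proof.
apply/eqP => xi3_1; have /eqP := xi3_sum.
by rewrite xi3_1 expr1n (_ : 1 + 1 + 1 = 3%:R) ?pnatr_eq0 //; ring.
Qed.

Lemma card_roots_lt (R : finIdomainType) (p : {poly R}) (A : {pred R}) :
  p != 0 -> {in A, forall x, root p x} -> (#|A| < size p)%N.
Proof.
move=> p_neq0 rootA; rewrite cardE; apply: max_poly_roots (enum_uniq _) => //.
by apply/allP => x; rewrite mem_enum; exact: rootA.
Qed.

Lemma psi3_1 (F : finFieldType) : psi3 (1 : F) = xi3.
Proof. by rewrite /psi3 oner_eq0 eqxx. Qed.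

Section AbsoluteTrace.
Variables (F : finFieldType) (n : nat).
Hypothesis cardF : #|F| = (3 ^ n)%N.

Local Notation Tr := (@absTr F n).
Local Notation chi x := (psi3 (Tr x)).

Lemma pchar3F : 3%N \in [pchar F].
Proof. exact: card_finPcharP cardF _. Qed.

Lemma natr3F : 3%:R = 0 :> F.
Proof. exact: pcharf0 pchar3F. Qed.

Lemma natr2F : 2%:R = -1 :> F.
Proof. by apply/eqP; rewrite -addr_eq0 natr1 natr3F. Qed.

Lemma addrrF (x : F) : x + x = - x.
Proof. by rewrite -mulr2n -mulr_natr natr2F mulrN1. Qed.

Lemma addrr_eq0F (x : F) : (x + x == 0) = (x == 0).
Proof. by rewrite addrrF oppr_eq0. Qed.

Lemma oppr1_neq1F : (-1 : F) != 1.
Proof. by rewrite eq_sym -addr_eq0 addrr_eq0F oner_eq0. Qed.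

Lemma pnat_pchar3F k : [pchar F].-nat (3 ^ k)%N.
Proof. by rewrite pnatX pnatE ?pchar3F. Qed.

Lemma exprDn3 k (x y : F) : (x + y) ^+ (3 ^ k) = x ^+ (3 ^ k) + y ^+ (3 ^ k).
Proof. exact/exprDn_pchar/pnat_pchar3F. Qed.

Lemma exprNn3 k (x : F) : (- x) ^+ (3 ^ k) = - x ^+ (3 ^ k).
Proof. exact/exprNn_pchar/pnat_pchar3F. Qed.

Fact absTr_is_zmod_morphism : zmod_morphism Tr.
Proof.
by move=> x y; rewrite /absTr -sumrB; apply: eq_bigr => i _; rewrite exprDn3 exprNn3.
Qed.

HB.instance Definition _ := GRing.isZmodMorphism.Build F F Tr absTr_is_zmod_morphism.

Lemma exp3_card_gt0 : (0 < n)%N.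
Proof.
have : (1 < #|F|)%N by apply/card_gt1P; exists 0, 1; rewrite eq_sym oner_eq0.
by rewrite cardF; case: n.
Qed.

Lemma absTr_expr3 x : Tr (x ^+ 3) = Tr x.
Proof.
rewrite /absTr -(prednK exp3_card_gt0) big_ord_recr big_ord_recl /=.
rewrite -exprM -expnS prednK ?exp3_card_gt0 // -cardF expf_card addrC.
by congr (_ + _); apply: eq_bigr => i _; rewrite -exprM -expnS.
Qed.

Lemma absTr_expr3n k x : Tr (x ^+ (3 ^ k)) = Tr x.
Proof. by elim: k => [|k IHk]; rewrite ?expr1 // expnSr exprM absTr_expr3. Qed.

Lemma absTr_cube x : Tr x ^+ 3 = Tr x.
Proof.
rewrite -[in RHS]absTr_expr3 -[_ ^+ 3]/(pFrobenius_aut pchar3F _) rmorph_sum.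
apply: eq_bigr => i _; transitivity (x ^+ (3 ^ i) ^+ 3) => //.
by rewrite -!exprM mulnC.
Qed.

Lemma absTr_values x : [|| Tr x == 0, Tr x == 1 | Tr x == -1].
Proof.
have : Tr x * (Tr x - 1) * (Tr x + 1) == 0.
  have -> : Tr x * (Tr x - 1) * (Tr x + 1) = Tr x ^+ 3 - Tr x by ring.
  by rewrite absTr_cube subrr.
by rewrite !mulf_eq0 subr_eq0 addr_eq0 -orbA.
Qed.

(* Otherwise every x would be a root of \sum_i 'X^(3^i), of degree 3^(n-1) < #|F|. *)
Lemma absTr_neq0 : exists x, Tr x != 0.
Proof.
case: (pickP (fun x => Tr x != 0)) => [x Trx | Tr0]; first by exists x.
pose P : {poly F} := \sum_(i < n) 'X^(3 ^ i).
have rootP x : root P x.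
  rewrite /root horner_sum; under eq_bigr do rewrite hornerXn.
  exact: negbFE (Tr0 x).
have P_neq0 : P != 0.
  apply: contraTneq isT => P0; have /eqP := congr1 (fun p : {poly F} => p`_1) P0.
  rewrite coef0 /P coef_sum -(prednK exp3_card_gt0) big_ord_recl /= coefXn eqxx.
  rewrite big1 ?addr0 ?oner_eq0 // => i _; rewrite coefXn.
  by rewrite -(expn0 3) eqn_exp2l // -[bump 0 i]/(i.+1).
have sizeP : (size P <= (3 ^ n.-1).+1)%N.
  apply: leq_trans (size_sum _ _ _) _; apply/bigmax_leqP => i _.
  by rewrite size_polyXn ltnS leq_exp2l // -ltnS prednK ?exp3_card_gt0.
exfalso; have := @card_roots_lt _ _ predT P_neq0 (fun x _ => rootP x).
have : (0 < 3 ^ n.-1)%N by rewrite expn_gt0.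
rewrite cardF -[in (3 ^ n)%N](prednK exp3_card_gt0) expnS.
by move: (size P) (3 ^ n.-1)%N sizeP => s a; lia.
Qed.

Lemma psi3_natr k : psi3 (k%:R : F) = xi3 ^+ k.
Proof.
rewrite {1 2}(divn_eq k 3) natrD natrM natr3F mulr0 add0r exprD mulnC exprM.
rewrite xi3_cube expr1n mul1r; have : (k %% 3 < 3)%N by rewrite ltn_pmod.
case: (k %% 3)%N => [|[|[|//]]] _; rewrite /psi3 ?mulr0n ?mulr1n ?eqxx //.
  by rewrite oner_eq0.
by rewrite natr2F oppr_eq0 oner_eq0 (negPf oppr1_neq1F).
Qed.

Lemma absTr_natr x : exists k, Tr x = k%:R.
Proof.
case/or3P: (absTr_values x) => /eqP->; first by exists 0%N.
  by exists 1%N.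
by exists 2%N; rewrite natr2F.
Qed.

Lemma psi3_absTrD x y : chi (x + y) = chi x * chi y.
Proof.
have [[a Tx] [b Ty]] := (absTr_natr x, absTr_natr y).
by rewrite raddfD /= Tx Ty -natrD !psi3_natr exprD.
Qed.

Lemma psi3_absTr0 : chi 0 = 1.
Proof. by rewrite raddf0 (psi3_natr 0). Qed.

Lemma psi3_absTr_addN x : chi x + chi (- x) = if Tr x == 0 then 2%:R else -1.
Proof.
have xi3_add_sqr : xi3 + xi3 ^+ 2 = -1.
  by apply/eqP; rewrite -addr_eq0 addrC addrA xi3_sum.
rewrite raddfN /=; case/or3P: (absTr_values x) => /eqP->.
- by rewrite oppr0 eqxx (psi3_natr 0).
- by rewrite oner_eq0 -natr2F (psi3_natr 1) psi3_natr.
- by rewrite oppr_eq0 oner_eq0 opprK -natr2F (psi3_natr 1) psi3_natr addrC.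
Qed.

End AbsoluteTrace.

Section WalshOfPower.
Variables (F : finFieldType) (n d : nat).
Hypothesis expd_inj : injective (fun x : F => x ^+ d).

Local Notation W := (walsh n (fun x : F => x ^+ d)).

Lemma walsh_pow_scale a b t : t != 0 -> b * t ^+ d = 1 -> W a b = W (a * t) 1.
Proof.
move=> t_neq0 btd; rewrite /walsh (reindex_inj (mulfI t_neq0)); apply: eq_bigr => x _.
by rewrite exprMn mulrA btd !mul1r mulrA.
Qed.

Lemma expd_inj_gt0 : (0 < d)%N.
Proof.
rewrite lt0n; apply: contraTneq isT => d0.
by have := @expd_inj 0 1; rewrite d0 !expr0 => /(_ erefl)/eqP; rewrite eq_sym oner_eq0.
Qed.

Lemma card_walsh_pairs v :
  #|[set ab : F * F | (ab.2 != 0) && (W ab.1 ab.2 == v)]| =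
  (#|F|.-1 * #|[set a | W a 1%R == v]|)%N.
Proof.
rewrite -[LHS]sum1dep_card big_mkcond /=.
rewrite -(pair_bigA _ (fun a b : F => if (b != 0) && (W a b == v) then 1%N else 0%N)).
rewrite exchange_big /=.
transitivity (\sum_(b : F) (b != 0%R) * #|[set a | W a 1%R == v]|)%N.
  apply: (eq_bigr (fun b => (b != 0%R) * #|[set a | W a 1%R == v]|)%N) => b _.
  have [-> | b_neq0] := eqVneq b 0; first by apply: big1.
  pose t := invF expd_inj b^-1; have td : t ^+ d = b^-1 := f_invF expd_inj b^-1.
  have t_neq0 : t != 0.
    apply: contra_eq_neq td => ->; rewrite expr0n gtn_eqF ?expd_inj_gt0 //.
    by rewrite eq_sym invr_eq0.
  have btd : b * t ^+ d = 1 by rewrite td mulfV.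
  rewrite mul1n -sum1dep_card [RHS]big_mkcond [RHS](reindex_inj (mulIf t_neq0)) /=.
  by under eq_bigr => a _ do rewrite (walsh_pow_scale a t_neq0 btd).
rewrite -big_distrl /= -big_mkcond sum1dep_card.
by rewrite cardsE cardC1.
Qed.

End WalshOfPower.

Section QuadraticExtension.
Variables (m : nat) (F : finFieldType).
Hypothesis cardF : #|F| = (3 ^ (2 * m))%N.

Local Notation q := (3 ^ m)%N.
Local Notation Tr := (@absTr F (2 * m)).
Local Notation chi x := (psi3 (Tr x)).

Lemma card_sqrq : #|F| = (q * q)%N.
Proof. by rewrite cardF mul2n -addnn expnD. Qed.

Lemma q_gt1 : (1 < q)%N.
Proof.
have := exp3_card_gt0 cardF; rewrite muln_gt0 => /andP[_ m_gt0].
by rewrite -(expn0 3) ltn_exp2l.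
Qed.

Lemma expqD (x y : F) : (x + y) ^+ q = x ^+ q + y ^+ q.
Proof. exact: exprDn3 cardF m x y. Qed.

Lemma expqN (x : F) : (- x) ^+ q = - x ^+ q.
Proof. exact: exprNn3 cardF m x. Qed.

Lemma expqK (x : F) : x ^+ q ^+ q = x.
Proof. by rewrite -exprM -card_sqrq expf_card. Qed.

Definition Fq : {pred F} := fun x => x ^+ q == x.
Definition Lq : {pred F} := fun x => x ^+ q == - x.

Lemma memFq x : (x \in Fq) = (x ^+ q == x). Proof. by []. Qed.
Lemma memLq x : (x \in Lq) = (x ^+ q == - x). Proof. by []. Qed.

Fact Fq_divring_closed : divring_closed Fq.
Proof.
split=> [|x y|x y]; rewrite !memFq ?expr1n // => /eqP Ex /eqP Ey.
  by rewrite expqD expqN Ex Ey.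
by rewrite exprMn exprVn Ex Ey.
Qed.

HB.instance Definition _ := GRing.isDivringClosed.Build F Fq Fq_divring_closed.

Fact Lq_zmod_closed : zmod_closed Lq.
Proof.
split=> [|x y]; first by rewrite memLq expr0n expn_eq0 oppr0.
by rewrite !memLq => /eqP Ex /eqP Ey; rewrite expqD expqN Ex Ey opprD.
Qed.

HB.instance Definition _ := GRing.isZmodClosed.Build F Lq Lq_zmod_closed.

Lemma mulr_Lq y z : y \in Lq -> z \in Lq -> y * z \in Fq.
Proof. by rewrite !memLq memFq exprMn => /eqP-> /eqP->; rewrite mulrNN. Qed.

Lemma mulr_Fq_Lq u y : u \in Fq -> y \in Lq -> u * y \in Lq.
Proof. by rewrite memFq !memLq exprMn => /eqP-> /eqP->; rewrite mulrN. Qed.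

Lemma invr_Lq y : y \in Lq -> y^-1 \in Lq.
Proof. by rewrite !memLq exprVn => /eqP->; rewrite invrN. Qed.

Lemma mulr_Lq_memFq s y : s \in Lq -> s != 0 -> (y * s \in Fq) = (y \in Lq).
Proof.
move=> sLq s_neq0; apply/idP/idP => [ysFq | yLq]; last exact: mulr_Lq.
by rewrite -(mulfK s_neq0 y) mulr_Fq_Lq ?invr_Lq.
Qed.

Lemma Fq_Lq_decomp_uniq u y : u \in Fq -> y \in Lq ->
  - ((u + y) + (u + y) ^+ q) = u /\ (u + y) ^+ q - (u + y) = y.
Proof.
rewrite memFq memLq expqD => /eqP-> /eqP->; split.
  have -> : u + y + (u - y) = u + u by ring.
  by rewrite (addrrF cardF) opprK.
have -> : u - y - (u + y) = - (y + y) by ring.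
by rewrite (addrrF cardF) opprK.
Qed.

(* In characteristic 3, - (x + x^q) = (x + x^q) / 2. *)
Lemma Fq_Lq_decomp x :
  [/\ - (x + x ^+ q) \in Fq, x ^+ q - x \in Lq & - (x + x ^+ q) + (x ^+ q - x) = x].
Proof.
split.
- by rewrite memFq expqN expqD expqK addrC.
- by rewrite memLq expqD expqN expqK opprB.
have -> : - (x + x ^+ q) + (x ^+ q - x) = - (x + x) by ring.
by rewrite (addrrF cardF) opprK.
Qed.

Lemma big_Fq_Lq (R : Type) (idx : R) (op : Monoid.com_law idx) (G : F -> R) :
  \big[op/idx]_x G x = \big[op/idx]_(u in Fq) \big[op/idx]_(y in Lq) G (u + y).
Proof.
rewrite pair_big_dep (reindex_onto (fun x => (- (x + x ^+ q), x ^+ q - x))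
  (fun p => p.1 + p.2)) /=; last first.
  by move=> [u y] /andP[uFq yLq] /=; have [-> ->] := Fq_Lq_decomp_uniq uFq yLq.
apply: eq_big => [x|x _]; have [uFq yLq ->] := Fq_Lq_decomp x => //.
by rewrite uFq yLq eqxx.
Qed.

Lemma card_Xq_eq_le (c : F) : (#|[pred x : F | x ^+ q == (c * x)%R]| <= q)%N.
Proof.
have sizeP : size ('X^q - c *: 'X : {poly F}) = q.+1.
  rewrite size_polyDl ?size_polyXn // size_polyN ltnS.
  by apply: leq_trans (size_scale_leq _ _) _; rewrite size_polyX q_gt1.
rewrite -ltnS -sizeP card_roots_lt // => [|x]; first by rewrite -size_poly_eq0 sizeP.
by rewrite inE /root !hornerE subr_eq0.
Qed.

Lemma card_Fq_Lq : #|Fq| = q /\ #|Lq| = q.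
Proof.
have card_prod : (#|Fq| * #|Lq| = q * q)%N.
  rewrite -card_sqrq -[#|F|]sum1_card (big_Fq_Lq _ (fun=> 1%N)) -sum_nat_const.
  by apply: eq_bigr => u _; rewrite sum1_card.
have : (#|Fq| <= q)%N.
  apply: leq_trans (card_Xq_eq_le 1).
  by apply/eq_leq/eq_card => x; rewrite inE mul1r.
have : (#|Lq| <= q)%N.
  apply: leq_trans (card_Xq_eq_le (-1)).
  by apply/eq_leq/eq_card => x; rewrite inE mulN1r.
by move: card_prod q_gt1 => /=; move: #|Fq| #|Lq| q => a b Q; nia.
Qed.

Lemma card_Fq : #|Fq| = q. Proof. by case: card_Fq_Lq. Qed.
Lemma card_Lq : #|Lq| = q. Proof. by case: card_Fq_Lq. Qed.

Section Reindex.
Variables (R : Type) (idx : R) (op : Monoid.com_law idx) (G : F -> R).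

Lemma big_Fq_addr z : z \in Fq ->
  \big[op/idx]_(u in Fq) G (u + z) = \big[op/idx]_(u in Fq) G u.
Proof.
move=> zFq; rewrite [RHS](reindex_inj (addIr z)).
by apply: eq_bigl => u; rewrite rpredDr.
Qed.

Lemma big_Fq_subr : \big[op/idx]_(e in Fq) G (1 - e) = \big[op/idx]_(e in Fq) G e.
Proof.
rewrite [RHS](reindex_inj (inv_inj (subKr 1))).
by apply: eq_bigl => e; rewrite rpredBl ?rpred1.
Qed.

Lemma big_Fq_mulr w : w \in Fq -> w != 0 ->
  \big[op/idx]_(u in Fq) G (u * w) = \big[op/idx]_(u in Fq) G u.
Proof.
move=> wFq w_neq0; rewrite [RHS](reindex_inj (mulIf w_neq0)).
by apply: eq_bigl => u; rewrite rpredMr ?unitfE.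
Qed.

Lemma big_Lq_mulr s : s \in Lq -> s != 0 ->
  \big[op/idx]_(y in Lq) G (y * s) = \big[op/idx]_(u in Fq) G u.
Proof.
move=> sLq s_neq0; rewrite [RHS](reindex_inj (mulIf s_neq0)).
by apply: eq_bigl => y; rewrite mulr_Lq_memFq.
Qed.

End Reindex.

Lemma absTr_Lq y : y \in Lq -> Tr y = 0.
Proof.
move=> /eqP yq; apply/eqP; rewrite -(addrr_eq0F cardF).
by rewrite -{1}(absTr_expr3n cardF m y) yq raddfN /= addNr.
Qed.

Lemma absTr_Fq_eq1 : exists2 z, z \in Fq & Tr z = 1.
Proof.
have [x Trx_neq0] := absTr_neq0 cardF.
have [wFq _ _] := Fq_Lq_decomp x; rewrite rpredN in wFq.
have Trw : Tr (x + x ^+ q) = - Tr x.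
  by rewrite raddfD /= (absTr_expr3n cardF) (addrrF cardF).
case/or3P: (absTr_values cardF (x + x ^+ q)) => /eqP Trw1.
- by move: Trx_neq0; rewrite -oppr_eq0 -Trw Trw1 eqxx.
- by exists (x + x ^+ q).
- by exists (- (x + x ^+ q)); rewrite ?rpredN // raddfN /= Trw1 opprK.
Qed.

Lemma sum_psi3_Fq_mul w : w \in Fq ->
  \sum_(u in Fq) chi (u * w) = if w == 0 then q%:R else 0.
Proof.
move=> wFq; have [-> | w_neq0] := eqVneq w 0.
  under eq_bigr do rewrite mulr0 (psi3_absTr0 cardF).
  by rewrite sumr_const card_Fq.
rewrite (big_Fq_mulr _ (fun u => chi u)) //; have [z zFq Trz] := absTr_Fq_eq1.
have : (1 - xi3) * \sum_(u in Fq) chi u = 0.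
  rewrite mulrBl mul1r -[X in X - _](big_Fq_addr _ _ zFq) mulr_sumr -sumrB.
  by apply: big1 => u _; rewrite (psi3_absTrD cardF) Trz psi3_1 mulrC subrr.
by move/eqP; rewrite mulf_eq0 subr_eq0 eq_sym (negPf xi3_neq1) => /eqP.
Qed.

(* Translating by an element of trace 1 permutes the three fibres of Tr on Fq. *)
Lemma sum_absTr_Fq (P : F -> nat) :
  (\sum_(u in Fq) P (Tr u) = 3 ^ m.-1 * (P 0%R + P 1%R + P (-1)%R))%N.
Proof.
have [z zFq Trz] := absTr_Fq_eq1.
have shift w : w \in Fq ->
    (\sum_(u in Fq) P (Tr u + Tr w)%R = \sum_(u in Fq) P (Tr u))%N.
  by move=> wFq; rewrite -[RHS](big_Fq_addr _ _ wFq); apply: eq_bigr => u _; rewrite raddfD.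
have sum3 : (\sum_(u in Fq) (P (Tr u) + P (Tr u + 1)%R + P (Tr u - 1)%R)
             = 3 * \sum_(u in Fq) P (Tr u))%N.
  rewrite !big_split /= -{1}Trz shift // -Trz -raddfN /= shift ?rpredN //.
  by set S := (\sum_(u in Fq) _)%N; lia.
have sum_const : (\sum_(u in Fq) (P (Tr u) + P (Tr u + 1)%R + P (Tr u - 1)%R)
                  = q * (P 0%R + P 1%R + P (-1)%R))%N.
  rewrite -card_Fq -sum_nat_const; apply: eq_bigr => u _.
  case/or3P: (absTr_values cardF u) => /eqP->; rewrite ?add0r ?subrr ?addNr //.
    by rewrite (addrrF cardF) addnC addnA.
  by rewrite -opprD (addrrF cardF) opprK -addnA addnC.
have m_gt0 : (0 < m)%N by have := exp3_card_gt0 cardF; rewrite muln_gt0 => /andP[].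
apply/eqP; rewrite -(eqn_pmul2l (isT : (0 < 3)%N)) mulnA -expnS prednK //.
by rewrite -sum3 sum_const.
Qed.

Lemma sqr_Lq_eq s y : s \in Lq ->
  (y \in Lq) && (y ^+ 2 == s ^+ 2) = (y == s) || (y == - s).
Proof.
move=> sLq; rewrite eqf_sqr; have [-> | _] := eqVneq y s; first by rewrite sLq.
by have [-> | _] := eqVneq y (- s); rewrite ?rpredN ?sLq ?andbF.
Qed.

Lemma big_Lq_sqr_eq (R : Type) (idx : R) (op : Monoid.com_law idx) (G : F -> R) s :
  s \in Lq -> s != 0 ->
  \big[op/idx]_(y in Lq | y ^+ 2 == s ^+ 2) G y = op (G s) (G (- s)).
Proof.
move=> sLq s_neq0; have Ns_neq : - s != s.
  by rewrite eq_sym -addr_eq0 (addrr_eq0F cardF).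
rewrite (bigD1 s) ?sLq ?eqxx //=; congr (op _ _); apply: big_pred1 => y /=.
rewrite sqr_Lq_eq //; have [-> | _] := eqVneq y (- s); first by rewrite orbT Ns_neq.
by rewrite orbF andbN.
Qed.

Definition sqrLq : {set F} := [set y ^+ 2 | y in [predD1 Lq & 0]].

Lemma sqrLq_Fq e : e \in sqrLq -> e \in Fq.
Proof. by case/imsetP=> y /andP[_ yLq] ->; rewrite expr2 mulr_Lq. Qed.

Lemma sqrLq_neq0 : 0 \notin sqrLq.
Proof.
by apply/imsetP=> -[y /andP[y_neq0 _] /eqP]; rewrite eq_sym expf_eq0 (negPf y_neq0) andbF.
Qed.

(* y |-> y^2 is two-to-one from Lq minus 0 onto sqrLq. *)
Lemma card_sqrLq : (#|sqrLq|.*2).+1 = q.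
Proof.
have := cardD1 0 Lq; rewrite rpred0 card_Lq add1n => ->; congr _.+1.
rewrite -[RHS]sum1_card (partition_big_imset (fun y => y ^+ 2)) -/sqrLq.
rewrite -mul2n mulnC -sum_nat_const; apply: eq_bigr => _ /imsetP[s /andP[s_neq0 sLq] ->].
transitivity (\sum_(y in Lq | y ^+ 2 == s ^+ 2) 1)%N; first by rewrite big_Lq_sqr_eq.
apply: eq_bigl => y.
rewrite inE; have [-> | //] := eqVneq y 0.
by rewrite exprS mul0r eq_sym expf_eq0 (negPf s_neq0) !andbF.
Qed.

Local Notation W c := (walsh (2 * m) (fun x : F => x ^+ (q + 2)) c 1).

(* As (u + y)^q = u - y, the two arguments of Tr differ by u^3 - u plus an
   element of Lq, both of trace 0. *)
Lemma absTr_walsh_term e g u y : e \in Fq -> g \in Lq -> u \in Fq -> y \in Lq ->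
  Tr (1 * (u + y) ^+ (q + 2) - ((1 - e) + g) * (u + y)) =
  Tr (u * (e - y ^+ 2) - g * y).
Proof.
move=> eFq gLq uFq yLq; have /eqP uq := uFq; have /eqP yq := yLq.
set l := u ^+ 2 * y - y ^+ 2 * y - y + e * y - u * g.
have lLq : l \in Lq.
  have u2Fq : u ^+ 2 \in Fq by exact: rpredX.
  have y2Fq : y ^+ 2 \in Fq by rewrite expr2; exact: mulr_Lq.
  by rewrite !(rpredB, rpredD) //; try apply: mulr_Fq_Lq.
have -> : 1 * (u + y) ^+ (q + 2) - ((1 - e) + g) * (u + y) =
          (u ^+ 3 - u) + l + (u * (e - y ^+ 2) - g * y).
  by rewrite exprD expqD uq yq /l; ring.
clearbody l; apply/eqP; rewrite -subr_eq0 -raddfB /= addrK raddfD /= (absTr_Lq lLq).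
by rewrite addr0 raddfB /= (absTr_expr3 cardF) subrr.
Qed.

Lemma walsh_Fq_Lq e g : e \in Fq -> g \in Lq ->
  W ((1 - e) + g) = q%:R * \sum_(y in Lq | y ^+ 2 == e) chi (- (g * y)).
Proof.
move=> eFq gLq; rewrite /walsh big_Fq_Lq exchange_big mulr_sumr big_mkcondr /=.
apply: eq_bigr => y yLq.
under eq_bigr => u uFq do rewrite absTr_walsh_term // (psi3_absTrD cardF).
rewrite -mulr_suml sum_psi3_Fq_mul ?rpredB ?expr2 ?mulr_Lq // subr_eq0 eq_sym.
by case: (_ == _); rewrite ?mul0r.
Qed.

Definition qz (z : int) : algC := q%:R * z%:~R.

Lemma eqr_qz z z' : (qz z == qz z') = (z == z').
Proof. by rewrite /qz (inj_eq (mulfI _)) ?eqr_int // pnatr_eq0 expn_eq0. Qed.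

Lemma walsh_Fq_Lq_0 g : g \in Lq -> W ((1 - 0) + g) = qz 1.
Proof.
move=> gLq; rewrite walsh_Fq_Lq ?rpred0 // (big_pred1 0) => [|y /=].
  by rewrite mulr0 oppr0 (psi3_absTr0 cardF).
by rewrite expf_eq0 /=; have [-> | _] := eqVneq y 0; rewrite ?rpred0 ?andbF.
Qed.

Lemma walsh_Fq_Lq_sqr s g : s \in Lq -> s != 0 -> g \in Lq ->
  W ((1 - s ^+ 2) + g) = qz (if Tr (g * s) == 0 then 2 else -1).
Proof.
move=> sLq s_neq0 gLq; rewrite walsh_Fq_Lq ?expr2 ?mulr_Lq //.
rewrite -expr2 big_Lq_sqr_eq //= mulrN opprK addrC (psi3_absTr_addN cardF).
by case: ifP.
Qed.

Lemma walsh_Fq_Lq_nonsqr e g : e \in Fq -> e != 0 -> e \notin sqrLq -> g \in Lq ->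
  W ((1 - e) + g) = qz 0.
Proof.
move=> eFq e_neq0 e_nsqr gLq.
rewrite walsh_Fq_Lq // big_pred0 => [|y]; first by rewrite /qz !mulr0.
apply/andP=> -[yLq /eqP ye]; move/negP: e_nsqr; apply; apply/imsetP; exists y => //.
by rewrite inE yLq andbT; apply: contraNneq e_neq0 => y0; rewrite -ye y0 expr0n.
Qed.

Definition nsqrFq : {set F} := [set e in Fq | (e != 0) && (e \notin sqrLq)].

Lemma big_Fq_sqrLq (R : Type) (idx : R) (op : Monoid.com_law idx) (G : F -> R) :
  \big[op/idx]_(e in Fq) G e =
  op (op (G 0) (\big[op/idx]_(e in sqrLq) G e)) (\big[op/idx]_(e in nsqrFq) G e).
Proof.
rewrite (bigD1 0) ?rpred0 //= (bigID (mem sqrLq)) /= Monoid.mulmA.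
congr (op (op _ _) _); apply: eq_bigl => e; rewrite ?inE -?andbA //.
have [eS | _] := boolP (e \in sqrLq); rewrite ?andbT ?andbF // (sqrLq_Fq eS).
by apply: contraNneq sqrLq_neq0 => <-.
Qed.

Lemma card_nsqrFq : #|nsqrFq| = #|sqrLq|.
Proof.
have := big_Fq_sqrLq addn (fun=> 1%N); rewrite /= !sum1_card card_Fq.
rewrite -card_sqrLq -addnn; set a := #|sqrLq|; set b := #|nsqrFq|; lia.
Qed.

Lemma card_walsh1_qz z :
  #|[set c | W c == qz z]| =
  (q * (1 == z :> int) + #|sqrLq| * (3 ^ m.-1 * ((2 == z :> int) + 2 * (-1 == z :> int)))
   + #|sqrLq| * (q * (0 == z :> int)))%N.
Proof.
rewrite -sum1dep_card big_mkcond /= big_Fq_Lq.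
rewrite -(big_Fq_subr addn (fun e => \sum_(g in Lq) _)%N) big_Fq_sqrLq /=.
congr (_ + _ + _)%N.
- under eq_bigr => g gLq do rewrite walsh_Fq_Lq_0 // eqr_qz.
  by rewrite sum_nat_const card_Lq.
- rewrite -sum_nat_const; apply: eq_bigr => _ /imsetP[s /andP[s_neq0 sLq] ->].
  under eq_bigr => g gLq do rewrite walsh_Fq_Lq_sqr // eqr_qz.
  rewrite (big_Lq_mulr addn (fun u => ((if Tr u == 0 then 2 else -1) == z : nat)) sLq s_neq0).
  rewrite (sum_absTr_Fq (fun t => ((if t == 0 then 2 else -1) == z : nat))) /=.
  by rewrite eqxx oner_eq0 oppr_eq0 oner_eq0 -addnA addnn -mul2n.
- rewrite -card_nsqrFq -sum_nat_const; apply: eq_bigr => e.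
  rewrite inE => /andP[eFq /andP[e_neq0 e_nsqr]].
  under eq_bigr => g gLq do rewrite walsh_Fq_Lq_nonsqr // eqr_qz.
  by rewrite sum_nat_const card_Lq.
Qed.

Lemma qzN1 : qz (-1) = - q%:R. Proof. by rewrite /qz rmorphN1 mulrN1. Qed.
Lemma qz0 : qz 0 = 0. Proof. exact: mulr0. Qed.
Lemma qz1 : qz 1 = q%:R. Proof. exact: mulr1. Qed.
Lemma qz2 : qz 2 = (2 * q)%:R. Proof. by rewrite /qz natrM mulrC. Qed.

(* z^(q^2-1) = 1 gives z^(q-1) = 1, hence z^3 = 1, and cubing is injective. *)
Lemma expq2_eq1 (z : F) : z ^+ (q + 2) = 1 -> z = 1.
Proof.
move=> zq2; have z_neq0 : z != 0.
  by apply: contra_eq_neq zq2 => ->; rewrite addn2 exprS mul0r eq_sym oner_eq0.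
have zqq : z ^+ (q * q).-1 = 1.
  apply: (mulIf z_neq0); rewrite mul1r -exprSr prednK ?muln_gt0 ?expn_gt0 //.
  by rewrite -card_sqrq expf_card.
have zq1 : z ^+ q.-1 = 1.
  have := congr1 (fun x => x ^+ q.-1) zq2; rewrite -exprM expr1n.
  have -> : ((q + 2) * q.-1 = (q * q).-1 + q.-1)%N.
    by have := q_gt1; move: q => Q; nia.
  by rewrite exprD zqq mul1r.
have z3 : z ^+ 3 = 1.
  by move: zq2; rewrite (_ : q + 2 = q.-1 + 3)%N ?exprD ?zq1 ?mul1r //; have := q_gt1; lia.
apply/eqP; rewrite -subr_eq0; have : (z - 1) ^+ (3 ^ 1) == 0.
  by rewrite (exprDn3 cardF) (exprNn3 cardF) expn1 z3 expr1n subrr.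
by rewrite expf_eq0 => /andP[_].
Qed.

Lemma expq2_inj : injective (fun x : F => x ^+ (q + 2)).
Proof.
move=> x y /= xy; have [y0 | y_neq0] := eqVneq y 0.
  by move: xy; rewrite y0 expr0n addn2 /= mulr0n => /eqP; rewrite expf_eq0 => /andP[_ /eqP].
have /expq2_eq1 xy1 : (x / y) ^+ (q + 2) = 1.
  by rewrite exprMn exprVn xy divff // expf_neq0.
by rewrite -(divfK y_neq0 x) xy1 mul1r.
Qed.

End QuadraticExtension.

Theorem theorem9 (m : nat) (F : finFieldType) (hm : (1 <= m)%N)
  (hF : #|F| = (3 ^ (2 * m))%N) :
  let q := (3 ^ m)%N in
  let f := fun x : F => x ^+ (q + 2) in
  let W := walsh (2 * m) f in
  let N := ((q ^ 4 - q ^ 3 - q ^ 2) + q)%N in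
  [/\ #|[set ab : F * F | (ab.2 != 0) && (W ab.1 ab.2 == - (q%:R))]| = (N %/ 3)%N,
      #|[set ab : F * F | (ab.2 != 0) && (W ab.1 ab.2 == 0)]| = (N %/ 2)%N,
      #|[set ab : F * F | (ab.2 != 0) && (W ab.1 ab.2 == q%:R)]| = (q ^ 3 - q)%N
    & #|[set ab : F * F | (ab.2 != 0) && (W ab.1 ab.2 == (2 * q)%:R)]| = (N %/ 6)%N].
Proof.
move=> q f W N.
have q_gt1 : (1 < q)%N := q_gt1 hF.
have N_eq : N = ((q * q).-1 * (q * q.-1))%N.
  by rewrite /N; clear -q_gt1; clearbody q; rewrite !expnS expn0 muln1; nia.
have divE d x : (0 < d)%N -> (d * x = N)%N -> x = (N %/ d)%N by move=> d_gt0 <-; rewrite mulKn.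
have q_odd : (#|sqrLq m F|.*2).+1 = q := card_sqrLq hF.
have q_3k : q = (3 * 3 ^ m.-1)%N by rewrite -expnS prednK.
rewrite !card_walsh_pairs; try exact: expq2_inj.
rewrite -(qzN1 m) -(qz2 m) -(qz1 m) -(qz0 m) !(card_walsh1_qz hF) (card_sqrq hF) /= -/q.
rewrite -mul2n in q_odd; move: #|sqrLq m F| (3 ^ m.-1)%N q_odd q_3k => r k q_odd q_3k.
have qm1 : q.-1 = (2 * r)%N by rewrite -q_odd.
rewrite !(muln0, muln1, addn0, add0n).
split; try apply: divE => //; rewrite ?N_eq ?qm1; set P := (q * q).-1.
- by rewrite [in RHS]q_3k; clearbody P; nia.
- by clearbody P; nia.
- by rewrite /P -subn1 mulnBl mul1n !expnS expn0 muln1 mulnA.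
- by rewrite [in RHS]q_3k; clearbody P; nia.
Qed.
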